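(* The class $G_{UDG}$ is a strict subclass of the class $G_{LGG}$: every ordered bipartite graph in $G_{UDG}$ belongs to $G_{LGG}$, and there is an ordered bipartite graph in $G_{LGG}$ that is not (up to order-preserving isomorphism) in $G_{UDG}$.
   Context: An ordered bipartite graph is $G=(U,V,E)$ where $U,V$ are disjoint finite sets, each carrying a strict total order, and $E\subseteq U\times V$. A unit distance graph (UDG) on a planar point set $P$ joins two points iff their Euclidean distance is exactly $1$. A locally Gabriel graph (LGG) on $P$ is a geometric graph such that for every edge $(u,v)$ the disk with diameter $\overline{uv}$ contains no neighbour of $u$ or $v$ (other than $u,v$). Construction. Let $G$ be a UDG or LGG on a point set $P$ in convex position, and let $p_1,p_2\in P$ be antipodal (there are parallel lines through $p_1$ and $p_2$ with all of $P$ between them). Draw the line $p_1p_2$ horizontally; let $U=\{u_1,\dots,u_n\}$ be the points of $P$ strictly above it and $V=\{v_1,\dots,v_m\}$ those strictly below, each labelled from right to left. Let $E'$ be the set of edges of $G$ with one endpoint in $U$ and the other in $V$. For an edge $(u,v)\in E'$ with $v\in V$, let $v^{r}$ and $v^{\ell}$ be the points immediately to the right and left of $v$ along the lower boundary of the convex hull (in $V\cup\{p_1,p_2\}$); at least one of $\angle uvv^{r}$, $\angle uvv^{\ell}$ is acute. Put $(u,v)$ in $E_1$ if $\angle uvv^{r}$ is acute, otherwise in $E_2$ (either choice if both are acute). $G_1=(U,V,E_1)$ is ordered by $u_1<\dots<u_n$, $v_1<\dots<v_m$; $G_2=(U,V,E_2)$ carries the reversed orders. $G'_1$ (resp. $G'_2$)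 is obtained from $G_1$ (resp. $G_2$) by deleting, for every $v\in V$, the edge joining $v$ to its neighbour of highest order in $U$ in that graph's ordering. $G_{UDG}$ (resp. $G_{LGG}$) is the class of all ordered bipartite graphs $G'_1,G'_2$ obtained in this way from UDGs (resp. LGGs) on convex point sets. *)

From Stdlib Require Import Reals List Arith.
Import ListNotations.
Open Scope R_scope.

Definition pt : Type := (R * R)%type.
Definition p0 : pt := (0, 0).

Definition vsub (p q : pt) : pt := (fst p - fst q, snd p - snd q).
Definition dot (p q : pt) : R := fst p * fst q + snd p * snd q.
Definition cross (p q : pt) : R := fst p * snd q - snd p * fst q.

Fixpoint wsum (ws : list R) (S : list pt) : pt :=
  match ws, S with
  | w :: ws', s :: S' =>
      let r := wsum ws' S' in (w * fst s + fst r, w * snd s + snd r)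
  | _, _ => (0, 0)
  end.

Definition in_hull (S : list pt) (q : pt) : Prop :=
  exists ws : list R,
    length ws = length S /\ Forall (fun w => 0 <= w) ws /\
    fold_right Rplus 0 ws = 1 /\ q = wsum ws S.

Definition convex_position (P : list pt) : Prop :=
  NoDup P /\
  forall i, (i < length P)%nat ->
    ~ in_hull (firstn i P ++ skipn (S i) P) (nth i P p0).

Definition antipodal (P : list pt) (p1 p2 : pt) : Prop :=
  exists nv : pt, nv <> (0, 0) /\
    forall q, In q P -> dot nv p1 <= dot nv q /\ dot nv q <= dot nv p2.

Definition udg (P : list pt) (p q : pt) : Prop :=
  In p P /\ In q P /\ dot (vsub p q) (vsub p q) = 1.

(* adj is a locally Gabriel graph on P: a simple graph on the points of P
   such that for every edge (u,v), the closed disk with diameter uv contains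
   no neighbour w of u or v other than u, v.  (w is in that closed disk iff
   (w-u).(w-v) <= 0.) *)
Definition is_LGG (P : list pt) (adj : pt -> pt -> Prop) : Prop :=
  (forall p q, adj p q -> In p P /\ In q P /\ p <> q) /\
  (forall p q, adj p q -> adj q p) /\
  (forall u v, adj u v -> forall w, w <> u -> w <> v ->
     (adj u w \/ adj v w) -> dot (vsub w u) (vsub w v) > 0).

(** ** Ordered bipartite graphs, in canonical form:
    U = {0,..,nU-1}, V = {0,..,nV-1} with the natural orders. Any ordered
    bipartite graph is order-isomorphic to exactly one such graph. *)
Record obg := mkObg { nU : nat; nV : nat; oadj : nat -> nat -> Prop }.

Definition obg_iso (G H : obg) : Prop :=
  nU G = nU H /\ nV G = nV H /\
  forall i j, (i < nU G)%nat -> (j < nV G)%nat -> (oadj G i j <-> oadj H i j).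

(** The line pl pr is drawn horizontally with pl on
    the left and pr on the right ("above" = to the left of the directed line
    pl -> pr).  Both drawings are covered since the pair (pl, pr) is an
    arbitrary ordered antipodal pair. *)

Definition above (pl pr q : pt) : Prop := cross (vsub pr pl) (vsub q pl) > 0.
Definition below (pl pr q : pt) : Prop := cross (vsub pr pl) (vsub q pl) < 0.

(* us = [u_1; ...; u_n]: the points of P strictly above, listed from right to
   left along the (upper) boundary of the convex hull, i.e. counterclockwise
   as seen from pl. *)
Definition upper_labelling (P : list pt) (pl pr : pt) (us : list pt) : Prop :=
  NoDup us /\ (forall q, In q us <-> In q P /\ above pl pr q) /\
  forall i j, (i < j)%nat -> (j < length us)%nat ->
    cross (vsub (nth i us p0) pl) (vsub (nth j us p0) pl) > 0.

(* vs = [v_1; ...; v_m]: the points strictly below, from right to left along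
   the lower boundary of the convex hull, i.e. clockwise as seen from pl. *)
Definition lower_labelling (P : list pt) (pl pr : pt) (vs : list pt) : Prop :=
  NoDup vs /\ (forall q, In q vs <-> In q P /\ below pl pr q) /\
  forall i j, (i < j)%nat -> (j < length vs)%nat ->
    cross (vsub (nth i vs p0) pl) (vsub (nth j vs p0) pl) < 0.

Definition acute (u v w : pt) : Prop := dot (vsub u v) (vsub w v) > 0.

(* right / left neighbours of v_(j+1) (0-based index j) along the lower
   boundary of the convex hull of V together with pl, pr *)
Definition vright (pr : pt) (vs : list pt) (j : nat) : pt :=
  match j with O => pr | S j' => nth j' vs pr end.
Definition vleft (pl : pt) (vs : list pt) (j : nat) : pt := nth (S j) vs pl.

(* side i j = true means the edge (u_i, v_j) is put in E1, false in E2: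
   E1 if angle u v v^r is acute, otherwise E2 (either choice if both acute). *)
Definition valid_split (adj : pt -> pt -> Prop) (pl pr : pt)
    (us vs : list pt) (side : nat -> nat -> bool) : Prop :=
  forall i j, (i < length us)%nat -> (j < length vs)%nat ->
    adj (nth i us p0) (nth j vs p0) ->
    let u := nth i us p0 in let v := nth j vs p0 in
    (side i j = true -> acute u v (vright pr vs j)) /\
    (side i j = false ->
       ~ acute u v (vright pr vs j) \/ acute u v (vleft pl vs j)).

Definition G1adj adj (us vs : list pt) side (i j : nat) : Prop :=
  (i < length us)%nat /\ (j < length vs)%nat /\
  adj (nth i us p0) (nth j vs p0) /\ side i j = true.

(* G2 = (U, V, E2) with reversed orders: index i of G2 is u_(n-i) *)
Definition G2adj adj (us vs : list pt) side (i j : nat) : Prop :=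
  (i < length us)%nat /\ (j < length vs)%nat /\
  adj (nth (length us - S i)%nat us p0) (nth (length vs - S j)%nat vs p0) /\
  side (length us - S i)%nat (length vs - S j)%nat = false.

(* G' : delete, for each v, the edge to its highest-ordered neighbour in U,
   i.e. keep an edge (i,j) iff j has a neighbour of higher order than i. *)
Definition prune (g : nat -> nat -> Prop) (i j : nat) : Prop :=
  g i j /\ exists k, (i < k)%nat /\ g k j.

Definition G1' adj us vs side : obg :=
  mkObg (length us) (length vs) (prune (G1adj adj us vs side)).
Definition G2' adj us vs side : obg :=
  mkObg (length us) (length vs) (prune (G2adj adj us vs side)).

Definition obtained_from (P : list pt) (adj : pt -> pt -> Prop) (H : obg)
  : Prop :=
  convex_position P /\
  exists (pl pr : pt) (us vs : list pt) (side : nat -> nat -> bool),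
    In pl P /\ In pr P /\ pl <> pr /\ antipodal P pl pr /\
    upper_labelling P pl pr us /\ lower_labelling P pl pr vs /\
    valid_split adj pl pr us vs side /\
    (obg_iso H (G1' adj us vs side) \/ obg_iso H (G2' adj us vs side)).

Definition in_G_UDG (H : obg) : Prop :=
  exists P : list pt, obtained_from P (udg P) H.

Definition in_G_LGG (H : obg) : Prop :=
  exists (P : list pt) (adj : pt -> pt -> Prop),
    is_LGG P adj /\ obtained_from P adj H.

From Stdlib Require Import Reals List Arith Lra Psatz.
Import ListNotations.
Open Scope R_scope.

(* Two unit-distance neighbours w, v of u satisfy 2 (w-u).(w-v) = |w-v|^2 > 0, so every
   unit distance graph is locally Gabriel.

   For strictness, take the ordered bipartite graph whose edges form the hexagon
   u0 v2 u1 v1 u3 v0; it arises from an explicit locally Gabriel graph on eleven points.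
   In a convex drawing respecting the labelling, the lower chain precedes the upper one
   as seen from pl, so the edges u1v1, u0v2 cross and so do u3v0, u0v1.  The diagonals
   of a convex quadrilateral are together longer than either pair of opposite sides;
   with all six hexagon edges of unit length this forces both |u0v1| < 1 and
   |u0v1| > 1. *)

Lemma wsum_app ws1 S1 ws2 S2 : length ws1 = length S1 ->
  wsum (ws1 ++ ws2) (S1 ++ S2) =
  (fst (wsum ws1 S1) + fst (wsum ws2 S2), snd (wsum ws1 S1) + snd (wsum ws2 S2)).
Proof.
  revert S1; induction ws1 as [|w ws1 IH]; intros [|s S1] Hl; simpl in *; try discriminate.
  - destruct (wsum ws2 S2); simpl; f_equal; ring.
  - injection Hl as Hl. rewrite (IH S1 Hl). simpl. f_equal; ring.
Qed.

Lemma sum_app (l1 l2 : list R) :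
  fold_right Rplus 0 (l1 ++ l2) = fold_right Rplus 0 l1 + fold_right Rplus 0 l2.
Proof. induction l1; simpl; try rewrite IHl1; ring. Qed.

Lemma length_app_cons_split {A B} (ws : list A) (S1 : list B) x S2 :
  length ws = length (S1 ++ x :: S2) ->
  exists ws1 w ws2, ws = ws1 ++ w :: ws2 /\
    length ws1 = length S1 /\ length ws2 = length S2.
Proof.
  revert S1; induction ws as [|a ws IH]; intros S1 H.
  - rewrite length_app in H; simpl in H; lia.
  - destruct S1 as [|b S1].
    + exists [], a, ws. simpl in *. auto.
    + simpl in H. injection H as H.
      destruct (IH S1 H) as (ws1 & w & ws2 & -> & H1 & H2).
      exists (a :: ws1), w, ws2. simpl. auto.
Qed.

Definition pt_eq_dec (p q : pt) : {p = q} + {p <> q}.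
Proof. decide equality; apply Req_EM_T. Defined.

Lemma wsum_extend L S ws : NoDup S -> NoDup L -> incl S L ->
  length ws = length S -> Forall (fun w => 0 <= w) ws ->
  exists ws', length ws' = length L /\ Forall (fun w => 0 <= w) ws' /\
    fold_right Rplus 0 ws' = fold_right Rplus 0 ws /\ wsum ws' L = wsum ws S.
Proof.
  revert S ws; induction L as [|x L IH]; intros S ws HS HL Hinc Hlen Hpos.
  - destruct S as [|s S]; [|destruct (Hinc s (or_introl eq_refl))].
    destruct ws; [|discriminate]. now exists [].
  - inversion HL as [|? ? Hx HL']; subst.
    destruct (in_dec pt_eq_dec x S) as [Hin|Hnin].
    + destruct (in_split x S Hin) as (S1 & S2 & ->).
      destruct (length_app_cons_split ws S1 x S2 Hlen) as (ws1 & w & ws2 & -> & Hl1 & Hl2).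
      apply Forall_app in Hpos as [Hp1 Hp2]. inversion Hp2 as [|? ? Hw Hp3]; subst.
      destruct (IH (S1 ++ S2) (ws1 ++ ws2)) as (ws' & H1 & H2 & H3 & H4); auto.
      * eapply NoDup_remove_1; eauto.
      * intros y Hy. destruct (Hinc y) as [->|]; auto.
        { apply in_app_or in Hy; apply in_or_app; simpl; tauto. }
        exfalso. eapply NoDup_remove_2; eauto.
      * rewrite !length_app; lia.
      * apply Forall_app; auto.
      * exists (w :: ws'). simpl. repeat split; auto.
        -- rewrite H3, !sum_app. simpl. ring.
        -- rewrite H4, !wsum_app by auto. simpl. f_equal; ring.
    + destruct (IH S ws) as (ws' & H1 & H2 & H3 & H4); auto.
      { intros y Hy. destruct (Hinc y Hy); auto. subst; contradiction. }
      exists (0 :: ws'). simpl. repeat split.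
      * lia.
      * constructor; auto; lra.
      * rewrite H3; ring.
      * rewrite H4. destruct (wsum ws S); simpl; f_equal; ring.
Qed.

Lemma in_hull_incl L S q : NoDup S -> NoDup L -> incl S L -> in_hull S q -> in_hull L q.
Proof.
  intros HS HL Hinc (ws & H1 & H2 & H3 & H4).
  destruct (wsum_extend L S ws HS HL Hinc H1 H2) as (ws' & G1 & G2 & G3 & G4).
  exists ws'. rewrite G3, G4. auto.
Qed.

Lemma list_nth_split {A} (d : A) P i : (i < length P)%nat ->
  P = firstn i P ++ nth i P d :: skipn (S i) P.
Proof.
  revert i; induction P as [|a P IH]; intros [|i] Hi; simpl in *; try lia; auto.
  f_equal. apply IH. lia.
Qed.

Lemma convex_position_not_in_hull P q S : convex_position P -> In q P -> NoDup S ->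
  (forall s, In s S -> In s P /\ s <> q) -> ~ in_hull S q.
Proof.
  intros [HND Hcv] Hq HS HSP Hh.
  destruct (In_nth P q p0 Hq) as (i & Hi & Hq_i).
  apply (Hcv i Hi). rewrite Hq_i.
  assert (HP := list_nth_split p0 P i Hi). rewrite Hq_i in HP.
  apply (in_hull_incl _ S); auto.
  - rewrite HP in HND. eapply NoDup_remove_1; eauto.
  - intros s Hs. destruct (HSP s Hs) as [HsP Hne]. rewrite HP in HsP.
    apply in_app_or in HsP. apply in_or_app. simpl in HsP.
    destruct HsP as [?|[?|?]]; auto. subst; contradiction.
Qed.

Lemma wsum_halfplane (n : pt) c ws L : length ws = length L ->
  Forall (fun w => 0 <= w) ws -> Forall (fun r => dot n r <= c) L ->
  dot n (wsum ws L) <= fold_right Rplus 0 ws * c.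
Proof.
  revert L; induction ws as [|w ws IH]; intros [|r L] Hl Hw HL; simpl in *; try discriminate.
  - unfold dot; simpl; lra.
  - inversion Hw; inversion HL; subst. injection Hl as Hl.
    specialize (IH L Hl ltac:(assumption) ltac:(assumption)).
    assert (w * dot n r <= w * c) by (apply Rmult_le_compat_l; assumption).
    unfold dot in *; simpl in *. nra.
Qed.

Lemma halfplane_not_in_hull L q (n : pt) c :
  dot n q > c -> Forall (fun r => dot n r <= c) L -> ~ in_hull L q.
Proof.
  intros Hq HL (ws & Hlen & Hpos & Hsum & ->).
  pose proof (wsum_halfplane n c ws L Hlen Hpos HL). rewrite Hsum in *. lra.
Qed.

Definition orient (o a b : pt) : R := cross (vsub a o) (vsub b o).

Lemma orient_swap o a b : orient o a b = - orient o b a.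
Proof. unfold orient, cross, vsub; simpl; ring. Qed.

Lemma orient_rotate o a b : orient o a b = orient a b o.
Proof. unfold orient, cross, vsub; simpl; ring. Qed.

Lemma orient_split o a b c : orient a b c = orient o a b + orient o b c - orient o a c.
Proof. unfold orient, cross, vsub; simpl; ring. Qed.

Lemma orient_neq o a b : orient o a b <> 0 -> o <> a /\ a <> b /\ o <> b.
Proof.
  intros H; repeat split; intros ->; apply H; unfold orient, cross, vsub; simpl; ring.
Qed.

(* Barycentric coordinates of b are ratios of orientations. *)
Lemma in_triangle o a b c : orient o a c > 0 -> orient o a b >= 0 ->
  orient o b c >= 0 -> orient a b c <= 0 -> in_hull [a; c; o] b.
Proof.
  intros Hac Hab Hbc Habc. rewrite (orient_split o) in Habc.
  set (K := orient o a c) in *.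
  exists [orient o b c / K; orient o a b / K; 1 - orient o b c / K - orient o a b / K].
  repeat split.
  - repeat apply Forall_cons; try apply Forall_nil; unfold Rdiv.
    + apply Rmult_le_pos; [lra|]. apply Rlt_le, Rinv_0_lt_compat; lra.
    + apply Rmult_le_pos; [lra|]. apply Rlt_le, Rinv_0_lt_compat; lra.
    + apply (Rmult_le_reg_r K); [lra|]. field_simplify; lra.
  - simpl; ring.
  - unfold K, orient in *. destruct a, b, c, o; unfold cross, vsub in *; simpl in *.
    f_equal; field; lra.
Qed.

Lemma convex_position_turn P o a b c : convex_position P ->
  In o P -> In a P -> In b P -> In c P ->
  orient o a b > 0 -> orient o b c > 0 -> orient o a c > 0 -> orient a b c > 0.
Proof.
  intros Hcv Ho Ha Hb Hc Hab Hbc Hac.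
  destruct (Rlt_or_le 0 (orient a b c)) as [|Habc]; [assumption|exfalso].
  destruct (orient_neq o a b) as (Hoa & Hab' & Hob); [lra|].
  destruct (orient_neq o b c) as (_ & Hbc' & _); [lra|].
  destruct (orient_neq o a c) as (_ & Hac' & Hoc); [lra|].
  apply (convex_position_not_in_hull P b [a; c; o]); auto.
  - repeat constructor; simpl; intuition.
  - intros s [<-|[<-|[<-|[]]]]; auto.
  - apply in_triangle; lra.
Qed.

Definition lerp (a c : pt) (s : R) : pt :=
  (fst a + s * (fst c - fst a), snd a + s * (snd c - snd a)).

Definition seg_cross (a c b d : pt) : Prop :=
  exists s t, 0 < s < 1 /\ 0 < t < 1 /\ lerp a c s = lerp b d t /\
    cross (vsub c a) (vsub d b) <> 0.

Lemma seg_cross_sym a c b d : seg_cross a c b d -> seg_cross b d a c.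
Proof.
  intros (s & t & Hs & Ht & E & Hc). exists t, s. repeat split; auto; try lra.
  intro E'. apply Hc. unfold cross, vsub in *; simpl in *. lra.
Qed.

(* The crossing point divides [a,c] in the ratio of the areas of d a b and b c d. *)
Lemma convex_quad_diagonals_cross a b c d :
  orient a b c > 0 -> orient b c d > 0 -> orient c d a > 0 -> orient d a b > 0 ->
  seg_cross a c b d.
Proof.
  intros Habc Hbcd Hcda Hdab.
  assert (Earea : orient d a b + orient b c d = orient a b c + orient c d a)
    by (unfold orient, cross, vsub; simpl; ring).
  assert (Ediag : cross (vsub c a) (vsub d b) = orient a b c + orient c d a)
    by (unfold orient, cross, vsub; simpl; ring).
  exists (orient d a b / (orient d a b + orient b c d)),
         (orient a b c / (orient a b c + orient c d a)).
  rewrite Earea; repeat split.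
  all: try (apply Rdiv_lt_0_compat; lra).
  all: try (apply (Rmult_lt_reg_r (orient a b c + orient c d a)); [lra|];
            field_simplify; lra).
  all: try (rewrite Ediag; lra).
  all: unfold lerp, orient in *; destruct a, b, c, d;
       unfold cross, vsub in *; simpl in *; f_equal; field; lra.
Qed.

Lemma convex_position_diagonals_cross P o a b c d : convex_position P ->
  In o P -> In a P -> In b P -> In c P -> In d P ->
  orient o a b > 0 -> orient o a c > 0 -> orient o a d > 0 ->
  orient o b c > 0 -> orient o b d > 0 -> orient o c d > 0 ->
  seg_cross a c b d.
Proof.
  intros Hcv Ho Ha Hb Hc Hd Hab Hac Had Hbc Hbd Hcd.
  apply convex_quad_diagonals_cross.
  - apply (convex_position_turn P o); auto.
  - apply (convex_position_turn P o); auto.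
  - rewrite <- (orient_rotate a c d). apply (convex_position_turn P o); auto.
  - rewrite (orient_rotate d a b). apply (convex_position_turn P o); auto.
Qed.

Definition dist2 (a b : pt) : R := dot (vsub a b) (vsub a b).
Definition edist (a b : pt) : R := sqrt (dist2 a b).

Lemma dist2_sym a b : dist2 a b = dist2 b a.
Proof. unfold dist2, dot, vsub; simpl; ring. Qed.

Lemma edist_sym a b : edist a b = edist b a.
Proof. unfold edist. rewrite dist2_sym. reflexivity. Qed.

Lemma edist_eq1 a b : dist2 a b = 1 -> edist a b = 1.
Proof. intros H. unfold edist. rewrite H. apply sqrt_1. Qed.

Lemma dist2_ge0 a b : 0 <= dist2 a b.
Proof. unfold dist2, dot; nra. Qed.

Lemma dist2_pos a b : a <> b -> dist2 a b > 0.
Proof.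
  destruct a as [a1 a2], b as [b1 b2]; unfold dist2, dot, vsub; simpl. intros Hne.
  destruct (Rlt_or_le 0 ((a1 - b1) * (a1 - b1) + (a2 - b2) * (a2 - b2))) as [|Hle];
    [assumption|].
  exfalso. apply Hne.
  pose proof (Rle_0_sqr (a1 - b1)). pose proof (Rle_0_sqr (a2 - b2)). unfold Rsqr in *.
  assert (E1 : (a1 - b1) * (a1 - b1) = 0) by lra.
  assert (E2 : (a2 - b2) * (a2 - b2) = 0) by lra.
  apply Rmult_integral in E1, E2. f_equal; lra.
Qed.

Lemma dot_apex_law u v w :
  2 * dot (vsub w u) (vsub w v) = dist2 w u + dist2 w v - dist2 u v.
Proof. unfold dist2, dot, vsub; simpl; ring. Qed.

Lemma udg_is_LGG P : is_LGG P (udg P).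
Proof.
  split; [|split].
  - intros p q (Hp & Hq & Hd). repeat split; auto. intros <-.
    unfold dot, vsub in Hd; simpl in Hd. lra.
  - intros p q (Hp & Hq & Hd). repeat split; auto. rewrite <- Hd.
    unfold dot, vsub; simpl; ring.
  - intros u v (_ & _ & Huv) w Hwu Hwv [(_ & _ & Huw)|(_ & _ & Hvw)];
      assert (Hapex := dot_apex_law u v w); fold (dist2 u v) in Huv.
    + pose proof (dist2_pos w v Hwv). rewrite (dist2_sym w u) in Hapex.
      fold (dist2 u w) in Huw. lra.
    + pose proof (dist2_pos w u Hwu). rewrite (dist2_sym w v) in Hapex.
      fold (dist2 v w) in Hvw. lra.
Qed.

Lemma edist_lt_through a o d : cross (vsub a o) (vsub d o) <> 0 ->
  edist a d < edist a o + edist o d.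
Proof.
  intros Hc. unfold edist.
  assert (HX := dist2_ge0 a o). assert (HY := dist2_ge0 o d).
  set (nx := sqrt (dist2 a o)). set (ny := sqrt (dist2 o d)).
  assert (Hnx : nx * nx = dist2 a o) by apply sqrt_sqrt, HX.
  assert (Hny : ny * ny = dist2 o d) by apply sqrt_sqrt, HY.
  assert (0 <= nx) by apply sqrt_pos. assert (0 <= ny) by apply sqrt_pos.
  set (g := dot (vsub a o) (vsub o d)).
  assert (Hlag : g * g + cross (vsub a o) (vsub d o) * cross (vsub a o) (vsub d o)
                 = dist2 a o * dist2 o d)
    by (unfold g, dist2, dot, cross, vsub; simpl; ring).
  assert (Hg : g < nx * ny).
  { assert (0 < cross (vsub a o) (vsub d o) * cross (vsub a o) (vsub d o))
      by (apply Rsqr_pos_lt in Hc; exact Hc).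
    rewrite <- Hnx, <- Hny in Hlag.
    destruct (Rlt_or_le g (nx * ny)) as [|Hle]; [assumption|].
    assert (0 <= nx * ny) by (apply Rmult_le_pos; assumption).
    assert (nx * ny * (nx * ny) <= g * g) by (apply Rmult_le_compat; lra).
    lra. }
  assert (Hsum : dist2 a d = dist2 a o + dist2 o d + 2 * g)
    by (unfold g, dist2, dot, vsub; simpl; ring).
  rewrite <- (sqrt_square (nx + ny)) by lra.
  apply sqrt_lt_1_alt. split; [apply dist2_ge0|]. nra.
Qed.

Lemma edist_lerp a c s : 0 <= s <= 1 ->
  edist a (lerp a c s) + edist (lerp a c s) c = edist a c.
Proof.
  intros Hs. unfold edist.
  replace (dist2 a (lerp a c s)) with (s * s * dist2 a c)
    by (unfold dist2, lerp, dot, vsub; simpl; ring).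
  replace (dist2 (lerp a c s) c) with ((1 - s) * (1 - s) * dist2 a c)
    by (unfold dist2, lerp, dot, vsub; simpl; ring).
  rewrite (sqrt_mult_alt (s * s)), (sqrt_mult_alt ((1 - s) * (1 - s)))
    by (apply Rmult_le_pos; lra).
  rewrite !sqrt_square by lra. ring.
Qed.

(* Through the crossing point o: |ad| < |ao| + |od| and |bc| < |bo| + |oc|. *)
Lemma seg_cross_sides_lt a c b d : seg_cross a c b d ->
  edist a d + edist b c < edist a c + edist b d.
Proof.
  intros (s & t & Hs & Ht & Eo & Hc).
  rewrite <- (edist_lerp a c s), <- (edist_lerp b d t) by lra.
  rewrite <- Eo. set (o := lerp a c s) in *.
  assert (Hao : vsub a o = (- s * fst (vsub c a), - s * snd (vsub c a)))
    by (unfold o, lerp, vsub; simpl; f_equal; ring).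
  assert (Hco : vsub c o = ((1 - s) * fst (vsub c a), (1 - s) * snd (vsub c a)))
    by (unfold o, lerp, vsub; simpl; f_equal; ring).
  assert (Hbo : vsub b o = (- t * fst (vsub d b), - t * snd (vsub d b)))
    by (rewrite Eo; unfold lerp, vsub; simpl; f_equal; ring).
  assert (Hdo : vsub d o = ((1 - t) * fst (vsub d b), (1 - t) * snd (vsub d b)))
    by (rewrite Eo; unfold lerp, vsub; simpl; f_equal; ring).
  assert (Had : edist a d < edist a o + edist o d).
  { apply edist_lt_through. rewrite Hao, Hdo.
    replace (cross _ _) with (- (s * (1 - t)) * cross (vsub c a) (vsub d b))
      by (unfold cross; simpl; ring).
    apply Rmult_integral_contrapositive; split; [|assumption].
    apply Ropp_neq_0_compat, Rmult_integral_contrapositive; split; lra. }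
  assert (Hbc : edist b c < edist b o + edist o c).
  { apply edist_lt_through. rewrite Hbo, Hco.
    replace (cross _ _) with (t * (1 - s) * cross (vsub c a) (vsub d b))
      by (unfold cross; simpl; ring).
    apply Rmult_integral_contrapositive; split; [|assumption].
    apply Rmult_integral_contrapositive; split; lra. }
  lra.
Qed.

(* x z w y q p is a unit hexagon: the crossing of its edges zx and wy forces
   |xy| < 1, while the crossing of its edge pq with xy forces |xy| > 1. *)
Lemma unit_hexagon_crossings_absurd x y z w p q :
  seg_cross y w z x -> seg_cross p q y x ->
  dist2 x z = 1 -> dist2 w z = 1 -> dist2 w y = 1 ->
  dist2 q y = 1 -> dist2 q p = 1 -> dist2 x p = 1 -> False.
Proof.
  intros Hywzx Hpqyx Hxz Hwz Hwy Hqy Hqp Hxp.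
  apply edist_eq1 in Hxz, Hwz, Hwy, Hqy, Hqp, Hxp.
  apply seg_cross_sides_lt in Hywzx, Hpqyx.
  rewrite (edist_sym z w), (edist_sym y w), (edist_sym z x) in Hywzx.
  rewrite (edist_sym p x), (edist_sym y q), (edist_sym p q) in Hpqyx.
  lra.
Qed.

(* The weights come from cu (v - o) - cv (u - o) = cross (v - o) (u - o) e = 0. *)
Lemma collinear_between_in_hull o e u v : cross (vsub u o) (vsub v o) = 0 ->
  cross e (vsub u o) > 0 -> cross e (vsub v o) < 0 -> in_hull [u; v] o.
Proof.
  intros Hpar Hu Hv.
  set (cu := cross e (vsub u o)) in *. set (cv := cross e (vsub v o)) in *.
  exists [- cv / (cu - cv); cu / (cu - cv)]. repeat split.
  - repeat apply Forall_cons; try apply Forall_nil;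
      apply Rlt_le, Rdiv_lt_0_compat; lra.
  - simpl. field. lra.
  - assert (Hid1 : cu * fst (vsub v o) - cv * fst (vsub u o)
                   = cross (vsub v o) (vsub u o) * fst e)
      by (unfold cu, cv, cross, vsub; simpl; ring).
    assert (Hid2 : cu * snd (vsub v o) - cv * snd (vsub u o)
                   = cross (vsub v o) (vsub u o) * snd e)
      by (unfold cu, cv, cross, vsub; simpl; ring).
    assert (Hpar' : cross (vsub v o) (vsub u o) = 0) by (unfold cross in *; lra).
    rewrite Hpar', Rmult_0_l in Hid1, Hid2.
    destruct o as [o1 o2], u as [u1 u2], v as [v1 v2]; unfold vsub in *; simpl in *.
    f_equal; field_simplify_eq; try lra; nra.
Qed.

Lemma perp_independent_zero (n e b : pt) :
  dot n e = 0 -> dot n b = 0 -> cross e b <> 0 -> n = (0, 0).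
Proof.
  intros He Hb Heb.
  assert (H1 : fst n * cross e b = dot n e * snd b - dot n b * snd e)
    by (unfold dot, cross; ring).
  assert (H2 : snd n * cross e b = dot n b * fst e - dot n e * fst b)
    by (unfold dot, cross; ring).
  rewrite He, Hb in H1, H2.
  destruct n as [n1 n2]; simpl in *. f_equal;
    [apply (Rmult_eq_reg_r (cross e b)) | apply (Rmult_eq_reg_r (cross e b))]; lra.
Qed.

(* The supporting line through pl gives orient pl v u >= 0, and equality would put pl
   between u and v. *)
Lemma antipodal_below_above_ccw P pl pr u v : convex_position P -> antipodal P pl pr ->
  In pl P -> In pr P -> In u P -> In v P ->
  above pl pr u -> below pl pr v -> orient pl v u > 0.
Proof.
  intros Hcv (n & Hn & Hbnd) Hpl Hpr Hu Hv Hab Hbe. unfold above, below in *.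
  set (e := vsub pr pl) in *.
  assert (Hdot : forall q, In q P -> 0 <= dot n (vsub q pl) <= dot n e).
  { intros q Hq. destruct (Hbnd q Hq), (Hbnd pr Hpr). unfold e, dot, vsub in *; simpl; lra. }
  assert (Hne : dot n e > 0).
  { destruct (Hdot u Hu) as [Hu0 Hue].
    destruct (Rle_lt_or_eq_dec 0 (dot n e)) as [|He0]; [lra|assumption|].
    exfalso. apply Hn. apply (perp_independent_zero n e (vsub u pl)); lra. }
  assert (Hid : orient pl v u * dot n e =
                cross e (vsub u pl) * dot n (vsub v pl)
                - cross e (vsub v pl) * dot n (vsub u pl))
    by (unfold orient, e, cross, dot, vsub; simpl; ring).
  destruct (Hdot u Hu), (Hdot v Hv).
  assert (Hge : orient pl v u * dot n e >= 0) by (rewrite Hid; nra).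
  destruct (Rtotal_order (orient pl v u) 0) as [Hlt|[Hcol|]]; [nra| |assumption].
  exfalso. apply (convex_position_not_in_hull P pl [u; v] Hcv).
  - exact Hpl.
  - assert (u <> v) by (intros ->; lra). repeat constructor; simpl; intuition.
  - assert (Hpl0 : cross e (vsub pl pl) = 0) by (unfold cross, vsub; simpl; ring).
    intros s [<-|[<-|[]]]; split; auto; intros ->; lra.
  - apply (collinear_between_in_hull pl e); auto.
    unfold orient in Hcol. unfold cross in *. lra.
Qed.

Section Labelling.

Variables (P : list pt) (pl pr : pt) (us vs : list pt).
Hypotheses (HP : convex_position P) (Hant : antipodal P pl pr)
  (Hpl : In pl P) (Hpr : In pr P)
  (Hup : upper_labelling P pl pr us) (Hlo : lower_labelling P pl pr vs).

Lemma upper_labelled i : (i < length us)%nat ->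
  In (nth i us p0) P /\ above pl pr (nth i us p0).
Proof. intros Hi. apply (proj1 (proj2 Hup)), nth_In, Hi. Qed.

Lemma lower_labelled j : (j < length vs)%nat ->
  In (nth j vs p0) P /\ below pl pr (nth j vs p0).
Proof. intros Hj. apply (proj1 (proj2 Hlo)), nth_In, Hj. Qed.

Lemma labelled_edges_cross i1 i2 j1 j2 :
  (i1 < i2 < length us)%nat -> (j2 < j1 < length vs)%nat ->
  seg_cross (nth j1 vs p0) (nth i1 us p0) (nth j2 vs p0) (nth i2 us p0).
Proof.
  intros Hi Hj.
  destruct (upper_labelled i1) as [Hu1 Au1]; [lia|].
  destruct (upper_labelled i2) as [Hu2 Au2]; [lia|].
  destruct (lower_labelled j1) as [Hv1 Bv1]; [lia|].
  destruct (lower_labelled j2) as [Hv2 Bv2]; [lia|].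
  apply (convex_position_diagonals_cross P pl); auto;
    try (apply (antipodal_below_above_ccw P pl pr); assumption).
  - rewrite orient_swap. apply Ropp_gt_lt_0_contravar, (proj2 (proj2 Hlo)); lia.
  - apply (proj2 (proj2 Hup)); lia.
Qed.

End Labelling.

Lemma G1'_unit_distance P us vs side i j :
  prune (G1adj (udg P) us vs side) i j -> dist2 (nth i us p0) (nth j vs p0) = 1.
Proof. intros ((_ & _ & (_ & _ & Hd) & _) & _). exact Hd. Qed.

Lemma G2'_unit_distance P us vs side i j :
  prune (G2adj (udg P) us vs side) i j ->
  dist2 (nth (length us - S i) us p0) (nth (length vs - S j) vs p0) = 1.
Proof. intros ((_ & _ & (_ & _ & Hd) & _) & _). exact Hd. Qed.

Definition witness_edge (i j : nat) : bool :=
  match i, j with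
  | 0, 0 | 3, 0 | 1, 1 | 3, 1 | 0, 2 | 1, 2 => true
  | _, _ => false
  end.

Definition witness : obg := mkObg 6 3 (fun i j => witness_edge i j = true).

Lemma witness_not_in_G_UDG : ~ in_G_UDG witness.
Proof.
  intros (P & Hcv & pl & pr & us & vs & side & Hpl & Hpr & _ & Hant & Hup & Hlo & _ & Hiso).
  pose proof (labelled_edges_cross P pl pr us vs Hcv Hant Hpl Hpr Hup Hlo) as Hcross.
  destruct Hiso as [(Hn & Hm & Hadj) | (Hn & Hm & Hadj)]; simpl in Hn, Hm, Hadj.
  - assert (Hunit : forall i j, witness_edge i j = true -> (i < 6)%nat -> (j < 3)%nat ->
                    dist2 (nth i us p0) (nth j vs p0) = 1)
      by (intros i j Hij Hi Hj;
          exact (G1'_unit_distance _ _ _ _ _ _ (proj1 (Hadj i j Hi Hj) Hij))).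
    apply (unit_hexagon_crossings_absurd (nth 0 us p0) (nth 1 vs p0) (nth 2 vs p0)
             (nth 1 us p0) (nth 0 vs p0) (nth 3 us p0)).
    1, 2: apply seg_cross_sym, Hcross; lia.
    all: apply Hunit; [reflexivity|lia|lia].
  - (* G'2 reverses both orders, so here the hexagon appears mirrored. *)
    assert (Hunit : forall i j, witness_edge (5 - i)%nat (2 - j)%nat = true ->
                    (i < 6)%nat -> (j < 3)%nat -> dist2 (nth i us p0) (nth j vs p0) = 1).
    { intros i j Hij Hi Hj.
      assert (Hij' := proj1 (Hadj (5 - i)%nat (2 - j)%nat ltac:(lia) ltac:(lia)) Hij).
      pose proof (G2'_unit_distance _ _ _ _ _ _ Hij') as Hd.
      rewrite <- Hn, <- Hm in Hd.
      replace (6 - S (5 - i))%nat with i in Hd by lia.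
      replace (3 - S (2 - j))%nat with j in Hd by lia.
      exact Hd. }
    apply (unit_hexagon_crossings_absurd (nth 5 us p0) (nth 1 vs p0) (nth 0 vs p0)
             (nth 4 us p0) (nth 2 vs p0) (nth 2 us p0)).
    1, 2: apply Hcross; lia.
    all: apply Hunit; [reflexivity|lia|lia].
Qed.

Definition ex_upper : list pt :=
  [(107, 209); (68, 225); (26, 235); (-62, 208); (-102, 192); (-104, 183)].
Definition ex_lower : list pt := [(107, -161); (56, -183); (-59, -160)].
Definition ex_pl : pt := (-110, 0).
Definition ex_pr : pt := (113, 0).
Definition ex_points : list pt := [ex_pr] ++ ex_upper ++ [ex_pl] ++ rev ex_lower.

Definition ex_u (i : nat) : pt := nth i ex_upper p0.
Definition ex_v (j : nat) : pt := nth j ex_lower p0.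

(* [witness_edge] together with the top neighbour (2,2), (4,1), (5,0) of each v,
   which pruning deletes. *)
Definition ex_edge (i j : nat) : bool :=
  match i, j with
  | 0, 2 | 1, 2 | 0, 0 | 3, 0 | 1, 1 | 3, 1 | 2, 2 | 4, 1 | 5, 0 => true
  | _, _ => false
  end.

Definition ex_adj (p q : pt) : Prop :=
  exists i j, (i < 6)%nat /\ (j < 3)%nat /\ ex_edge i j = true /\
    ((p = ex_u i /\ q = ex_v j) \/ (p = ex_v j /\ q = ex_u i)).

Ltac case_u i := destruct i as [|[|[|[|[|[|i]]]]]].
Ltac case_v j := destruct j as [|[|[|j]]].

Lemma ex_u_neq_v i j : (i < 6)%nat -> (j < 3)%nat -> ex_u i <> ex_v j.
Proof.
  intros Hi Hj E. assert (Hy : snd (ex_u i) = snd (ex_v j)) by (rewrite E; reflexivity).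
  revert Hy. case_u i; try lia; case_v j; try lia; unfold ex_u, ex_v; simpl; lra.
Qed.

Lemma ex_u_inj i i' : (i < 6)%nat -> (i' < 6)%nat -> ex_u i = ex_u i' -> i = i'.
Proof.
  intros Hi Hi'. case_u i; try lia; case_u i'; try lia; unfold ex_u; simpl;
    intro E; auto; injection E; lra.
Qed.

Lemma ex_v_inj j j' : (j < 3)%nat -> (j' < 3)%nat -> ex_v j = ex_v j' -> j = j'.
Proof.
  intros Hj Hj'. case_v j; try lia; case_v j'; try lia; unfold ex_v; simpl;
    intro E; auto; injection E; lra.
Qed.

Lemma ex_adj_edge i j : (i < 6)%nat -> (j < 3)%nat ->
  ex_adj (ex_u i) (ex_v j) -> ex_edge i j = true.
Proof.
  intros Hi Hj (i' & j' & Hi' & Hj' & E & [[E1 E2]|[E1 _]]).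
  - apply ex_u_inj in E1; apply ex_v_inj in E2; auto. subst; assumption.
  - destruct (ex_u_neq_v i j' Hi Hj' E1).
Qed.

Lemma ex_gabriel_at_u i j j' : ex_edge i j = true -> ex_edge i j' = true -> j <> j' ->
  dot (vsub (ex_v j') (ex_u i)) (vsub (ex_v j') (ex_v j)) > 0.
Proof.
  intros. case_u i; case_v j; try discriminate; case_v j'; try discriminate;
    try congruence; unfold ex_u, ex_v, dot, vsub; simpl; lra.
Qed.

Lemma ex_gabriel_at_v i i' j : ex_edge i j = true -> ex_edge i' j = true -> i <> i' ->
  dot (vsub (ex_u i') (ex_u i)) (vsub (ex_u i') (ex_v j)) > 0.
Proof.
  intros. case_v j; case_u i; try discriminate; case_u i'; try discriminate;
    try congruence; unfold ex_u, ex_v, dot, vsub; simpl; lra.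
Qed.

Lemma ex_edge_acute_right i j : ex_edge i j = true ->
  acute (ex_u i) (ex_v j) (vright ex_pr ex_lower j).
Proof.
  intros. case_u i; case_v j; try discriminate;
    unfold acute, ex_u, ex_v, dot, vsub; simpl; lra.
Qed.

Lemma ex_u_in i : (i < 6)%nat -> In (ex_u i) ex_points.
Proof. intros. case_u i; try lia; unfold ex_u, ex_points; simpl; tauto. Qed.

Lemma ex_v_in j : (j < 3)%nat -> In (ex_v j) ex_points.
Proof. intros. case_v j; try lia; unfold ex_v, ex_points; simpl; tauto. Qed.

Lemma ex_gabriel i j : (i < 6)%nat -> (j < 3)%nat -> ex_edge i j = true ->
  forall w, w <> ex_u i -> w <> ex_v j -> (ex_adj (ex_u i) w \/ ex_adj (ex_v j) w) ->
  dot (vsub w (ex_u i)) (vsub w (ex_v j)) > 0.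
Proof.
  intros Hi Hj Hij w Hwu Hwv
    [(i' & j' & Hi' & Hj' & E & [[E1 ->]|[E1 _]])
    |(i' & j' & Hi' & Hj' & E & [[E1 _]|[E1 ->]])].
  - apply ex_u_inj in E1; auto. subst i'.
    apply ex_gabriel_at_u; [assumption|assumption|congruence].
  - destruct (ex_u_neq_v i j' Hi Hj' E1).
  - destruct (ex_u_neq_v i' j Hi' Hj (eq_sym E1)).
  - apply ex_v_inj in E1; auto. subst j'.
    apply ex_gabriel_at_v; [assumption|assumption|congruence].
Qed.

Lemma ex_is_LGG : is_LGG ex_points ex_adj.
Proof.
  split; [|split].
  - intros p q (i & j & Hi & Hj & _ & [[-> ->]|[-> ->]]).
    + repeat split; [apply ex_u_in|apply ex_v_in|apply ex_u_neq_v]; auto.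
    + repeat split; [apply ex_v_in|apply ex_u_in|]; auto.
      intros E. exact (ex_u_neq_v i j Hi Hj (eq_sym E)).
  - intros p q (i & j & Hi & Hj & E & H). exists i, j. repeat split; auto. tauto.
  - intros u v (i & j & Hi & Hj & E & [[-> ->]|[-> ->]]) w Hwu Hwv Hadj.
    + apply ex_gabriel; auto.
    + pose proof (ex_gabriel i j Hi Hj E w Hwv Hwu ltac:(tauto)) as Hg.
      unfold dot, vsub in *; simpl in *. lra.
Qed.

Ltac solve_NoDup := repeat (apply NoDup_cons;
  [simpl; let Hin := fresh in intro Hin;
   repeat (destruct Hin as [Hin|Hin]; [injection Hin; intros; lra|]); exact Hin|]);
  apply NoDup_nil.

Ltac solve_Forall_halfplane := apply Forall_forall; let r := fresh in let Hr := fresh in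
  intros r Hr; simpl in Hr;
  repeat (destruct Hr as [Hr|Hr]; [subst r; unfold dot; simpl; lra|]); contradiction.

(* The i-th point of [ex_points] is cut off from the others by the line n . x = c. *)
Definition ex_support : list (pt * R) :=
  [((370, 0), 39590); ((225, 45), 25425); ((26, 81), 19711); ((-17, 130), 28094);
   ((-43, 128), 28962); ((-25, 42), 10286); ((-192, 8), 21120); ((-343, -45), 27437);
   ((-183, -166), 20130); ((-1, -166), 26619); ((183, -57), 20679)].

Lemma ex_convex : convex_position ex_points.
Proof.
  split.
  - unfold ex_points, ex_upper, ex_lower, ex_pl, ex_pr; simpl. solve_NoDup.
  - intros i Hi. unfold ex_points in Hi; simpl in Hi.
    apply (halfplane_not_in_hull _ _ (fst (nth i ex_support (p0, 0)))
                                     (snd (nth i ex_support (p0, 0)))).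
    all: do 11 (destruct i as [|i];
                [simpl; solve [unfold dot; simpl; lra | solve_Forall_halfplane]|]).
    all: lia.
Qed.

Lemma ex_antipodal : antipodal ex_points ex_pl ex_pr.
Proof.
  exists (1, 0). split.
  - intros E. injection E; lra.
  - intros q Hq. unfold ex_points, ex_upper, ex_lower, ex_pl, ex_pr in *. simpl in Hq.
    repeat (destruct Hq as [Hq|Hq]; [subst q; unfold dot; simpl; lra|]). contradiction.
Qed.

Lemma ex_upper_labelling : upper_labelling ex_points ex_pl ex_pr ex_upper.
Proof.
  split; [|split].
  - unfold ex_upper; solve_NoDup.
  - intros q; unfold ex_points, ex_upper, ex_lower, ex_pl, ex_pr, above, cross, vsub;
      simpl; split.
    + intros Hq. repeat (destruct Hq as [Hq|Hq]; [subst q; simpl; split; [tauto|lra]|]).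
      contradiction.
    + intros [Hq Ha].
      repeat (destruct Hq as [Hq|Hq]; [subst q; simpl in *; first [tauto|lra]|]).
      contradiction.
  - intros i j Hij Hj. unfold ex_upper in Hj; simpl in Hj.
    case_u i; case_u j; try lia; unfold ex_upper, ex_pl, cross, vsub; simpl; lra.
Qed.

Lemma ex_lower_labelling : lower_labelling ex_points ex_pl ex_pr ex_lower.
Proof.
  split; [|split].
  - unfold ex_lower; solve_NoDup.
  - intros q; unfold ex_points, ex_upper, ex_lower, ex_pl, ex_pr, below, cross, vsub;
      simpl; split.
    + intros Hq. repeat (destruct Hq as [Hq|Hq]; [subst q; simpl; split; [tauto|lra]|]).
      contradiction.
    + intros [Hq Ha].
      repeat (destruct Hq as [Hq|Hq]; [subst q; simpl in *; first [tauto|lra]|]).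
      contradiction.
  - intros i j Hij Hj. unfold ex_lower in Hj; simpl in Hj.
    case_v i; case_v j; try lia; unfold ex_lower, ex_pl, cross, vsub; simpl; lra.
Qed.

Lemma ex_valid_split : valid_split ex_adj ex_pl ex_pr ex_upper ex_lower (fun _ _ => true).
Proof.
  intros i j Hi Hj Hadj. simpl in Hi, Hj. split.
  - intros _. apply ex_edge_acute_right, ex_adj_edge; assumption.
  - discriminate.
Qed.

Lemma ex_G1 i j :
  G1adj ex_adj ex_upper ex_lower (fun _ _ => true) i j <->
  (i < 6)%nat /\ (j < 3)%nat /\ ex_edge i j = true.
Proof.
  split.
  - intros (Hi & Hj & Hadj & _). simpl in Hi, Hj. repeat split; auto.
    apply ex_adj_edge; assumption.
  - intros (Hi & Hj & E). repeat split; auto. exists i, j. repeat split; auto.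
Qed.

Lemma ex_G1'_witness : obg_iso witness (G1' ex_adj ex_upper ex_lower (fun _ _ => true)).
Proof.
  split; [reflexivity|split; [reflexivity|]].
  intros i j Hi Hj. simpl in Hi, Hj. unfold G1', prune; simpl oadj.
  rewrite ex_G1. setoid_rewrite ex_G1.
  case_u i; try lia; case_v j; try lia; simpl; split.
  all: try (intros Hw; discriminate Hw).
  all: try (intros ((_ & _ & E) & k & Hk & Hk6 & _ & Ek);
            case_u k; try lia; try discriminate; reflexivity).
  all: intros _; split; [repeat split; (lia || reflexivity)|].
  all: let higher k := solve [exists k; repeat split; (lia || reflexivity)] in
       first [higher 1%nat | higher 2%nat | higher 3%nat | higher 4%nat | higher 5%nat].
Qed.

Lemma witness_in_G_LGG : in_G_LGG witness.
Proof.
  exists ex_points, ex_adj. split; [exact ex_is_LGG|]. split; [exact ex_convex|].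
  exists ex_pl, ex_pr, ex_upper, ex_lower, (fun _ _ => true).
  split; [unfold ex_points; simpl; tauto|].
  split; [unfold ex_points; simpl; tauto|].
  split; [intros E; injection E; lra|].
  exact (conj ex_antipodal (conj ex_upper_labelling (conj ex_lower_labelling
           (conj ex_valid_split (or_introl ex_G1'_witness))))).
Qed.

Theorem lemma9 :
  (forall H : obg, in_G_UDG H -> in_G_LGG H) /\
  (exists H : obg, in_G_LGG H /\ ~ in_G_UDG H).
Proof.
  split.
  - intros H (P & HP). exists P, (udg P). split; [apply udg_is_LGG|exact HP].
  - exists witness. split; [exact witness_in_G_LGG|exact witness_not_in_G_UDG].
Qed.
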